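(* Let $n>d\ge1$ and let $G$ be a connected graph with $n$ vertices and diameter $d$. Then $$\sigma_2(G)\ge g_2(d)+(n-1-d)\left\lceil\tfrac d2\right\rceil\left(\left\lceil\tfrac d2\right\rceil+1\right).$$ Equality holds for the tree consisting of a path $P$ of length $d$ plus $n-d-1$ leaves all adjacent to one vertex of $P$ of eccentricity $\lceil d/2\rceil$.
   Context: All graphs are finite, simple, undirected. For a connected graph $G$ and $u\in V(G)$, the eccentricity $\varepsilon_G(u)=\max_{v\in V(G)} d_G(u,v)$; the diameter is $\max_u\varepsilon_G(u)$. $\sigma_2(G)=\sum_{uv\in E(G)}\varepsilon_G(u)\varepsilon_G(v)$. Here $g_2(d)=\sum_{i=0}^{d-1}\max\{i,d-i\}\cdot\max\{i+1,d-i-1\}$ (the value of $\sigma_2$ on the path with $d$ edges), which equals $\frac{7d^3-4d}{12}$ for even $d$ and $\frac{7d^3-d+6}{12}$ for odd $d$. *)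

From mathcomp Require Import all_boot.
Set Implicit Arguments. Unset Strict Implicit. Unset Printing Implicit Defensive.

Section Graph.
Variables (T : finType) (e : rel T).

Fixpoint ball (k : nat) (u : T) : {set T} :=
  if k is k'.+1 then ball k' u :|: [set y | [exists x in ball k' u, e x y]]
  else [set u].

(* graph distance: least k such that v is within k steps of u
   (equals #|T| only if v is unreachable, which never happens in a
   connected graph) *)
Definition dist (u v : T) : nat := find (fun k => v \in ball k u) (iota 0 #|T|).

Definition connected : Prop := forall u v : T, connect e u v.

Definition ecc (u : T) : nat := \max_(v : T) dist u v.

Definition diameter : nat := \max_(u : T) ecc u.

Definition edges : {set {set T}} := [set E : {set T} | [exists u : T, exists v : T, e u v && (E == [set u; v])]].

Definition sigma2 : nat := \sum_(E in edges) \prod_(x in E) ecc x.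

End Graph.

Definition g2 (d : nat) : nat :=
  \sum_(i < d) maxn i (d - i) * maxn i.+1 (d - i.+1).

Definition sigma2_bound (n d : nat) : nat :=
  g2 d + (n - 1 - d) * (uphalf d * (uphalf d).+1).

(* The extremal tree on vertices 0..n-1: path 0-1-...-d, and every vertex
   i > d is a leaf adjacent to path vertex d./2 = floor(d/2), whose
   eccentricity on the path is max(floor(d/2), d - floor(d/2)) = ceil(d/2). *)
Definition extremal_tree (n d : nat) : rel 'I_n := fun i j =>
  [|| (i <= d) && (j <= d) && ((i.+1 == j :> nat) || (j.+1 == i :> nat)),
      (d < i) && (j == d./2 :> nat)
    | (d < j) && (i == d./2 :> nat)].
Arguments extremal_tree n d : clear implicits.

From mathcomp Require Import all_boot zify.
Set Implicit Arguments. Unset Strict Implicit. Unset Printing Implicit Defensive.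

(* Fix vertices a, b at distance d = diam G and a shortest a-b
   path a = p_0, ..., p_d = b.  Every vertex has eccentricity at least
   r = ceil(d/2), and p_i has eccentricity at least max(i, d - i), so the d
   path edges weigh at least g2 d.  To each of the n - d - 1 off-path vertices
   w charge the edges going down from w for the height min(dist a, dist b);
   these edge sets are pairwise disjoint, disjoint from the path, and each has
   weight at least r(r + 1) (lemma down_edges_weight).

   Its distance function is given by an explicit formula on
   the naturals, identified with the graph distance through a characterization
   of distances by the breadth-first-search recursion; eccentricities,
   diameter and sigma2 are then computed edge by edge, each non-root vertex
   being matched with the edge to its parent. *)

Section Distance.
Variables (T : finType) (e : rel T).

Lemma ball_center u : u \in ball e 0 u.
Proof. by rewrite inE. Qed.

Lemma ball_le k m u v : k <= m -> v \in ball e k u -> v \in ball e m u.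
Proof.
move=> /subnK <-; elim: (m - k) => [|j IH] // /IH Hv.
by rewrite addSn /= in_setU Hv.
Qed.

Lemma ball_step k u x y : x \in ball e k u -> e x y -> y \in ball e k.+1 u.
Proof.
by move=> Hx Hxy; rewrite /= in_setU inE; apply/orP; right; apply/existsP; exists x; rewrite Hx.
Qed.

Lemma ball_comp i j u v w :
  v \in ball e i u -> w \in ball e j v -> w \in ball e (i + j) u.
Proof.
move=> Hv; elim: j w => [|j IH] w /=; first by rewrite addn0 inE => /eqP->.
rewrite addnS in_setU => /orP[/IH|]; first exact: ball_le.
by rewrite inE => /existsP[x /andP[/IH Hx Hxw]]; exact: ball_step Hx Hxw.
Qed.

Lemma ball_path x s : path e x s -> last x s \in ball e (size s) x.
Proof.
elim: s x => [|y s IH] x /=; first by rewrite inE.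
by case/andP=> Hxy /IH; exact: ball_comp (ball_step (ball_center x) Hxy).
Qed.

Lemma ball_connect k u v : v \in ball e k u -> connect e u v.
Proof.
elim: k v => [|k IH] v /=; first by rewrite inE => /eqP->.
rewrite in_setU => /orP[/IH //|]; rewrite inE => /existsP[x /andP[/IH Hx Hxv]].
exact: connect_trans Hx (connect1 Hxv).
Qed.

Hypothesis econ : connected e.

(* In a connected graph every vertex is reached by a duplicate-free walk,
   hence lies in a ball of radius less than #|T|; so dist is well defined. *)
Lemma ball_exists u v : exists2 k, k < #|T| & v \in ball e k u.
Proof.
have /connectP[s Hs ->] := econ u v.
case: (shortenP Hs) => s' Hs' Hu _; exists (size s'); last exact: ball_path.
by move: (card_uniqP Hu) => /= <-; exact: max_card.
Qed.

Lemma mem_ballE k u v : (v \in ball e k u) = (dist e u v <= k).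
Proof.
have [k0 k0_lt Hk0] := ball_exists u v.
have has_ball : has (fun k => v \in ball e k u) (iota 0 #|T|).
  by apply/hasP; exists k0; rewrite ?mem_iota.
have dist_lt : dist e u v < #|T| by rewrite -(size_iota 0 #|T|) -has_find.
have Hd : v \in ball e (dist e u v) u.
  by have := nth_find 0 has_ball; rewrite nth_iota // add0n.
apply/idP/idP => [Hk|]; last by move=> /ball_le; apply.
case: (ltnP k #|T|) => [k_lt|k_ge]; last exact: leq_trans (ltnW dist_lt) k_ge.
rewrite leqNgt; apply/negP => /(before_find 0).
by rewrite nth_iota // add0n Hk.
Qed.

Lemma dist_ball u v : v \in ball e (dist e u v) u.
Proof. by rewrite mem_ballE. Qed.

Lemma dist_self u : dist e u u = 0.
Proof. by apply/eqP; rewrite -leqn0 -mem_ballE ball_center. Qed.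

Lemma dist_eq0 u v : dist e u v = 0 -> v = u.
Proof. by move=> H; move: (dist_ball u v); rewrite H inE => /eqP. Qed.

Lemma dist_triangle u v w : dist e u w <= dist e u v + dist e v w.
Proof. by rewrite -mem_ballE; exact: ball_comp (dist_ball _ _) (dist_ball _ _). Qed.

Lemma dist_edge u x y : e x y -> dist e u y <= (dist e u x).+1.
Proof. by rewrite -mem_ballE; exact: ball_step (dist_ball _ _). Qed.

Lemma dist_pred u v : v != u -> exists x, e x v /\ (dist e u x).+1 = dist e u v.
Proof.
move=> vu; have /prednK Hd : 0 < dist e u v.
  by rewrite lt0n; apply: contra vu => /eqP /dist_eq0 ->.
move: (dist_ball u v); rewrite -Hd /= in_setU => /orP[|].
  by rewrite mem_ballE -ltnS Hd ltnn.
rewrite inE => /existsP[x /andP[Hx Hxv]]; exists x; split => //.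
apply/eqP; rewrite eqn_leq ltnS -mem_ballE Hx /= Hd; exact: dist_edge Hxv.
Qed.

Lemma dist_ecc u v : dist e u v <= ecc e u.
Proof. exact: (leq_bigmax (F := dist e u)). Qed.

Hypothesis esym : symmetric e.

Lemma ball_sym k u v : v \in ball e k u -> u \in ball e k v.
Proof.
elim: k u v => [|k IH] u v /=; first by rewrite !inE => /eqP->.
rewrite in_setU => /orP[/IH H|]; first by rewrite in_setU H.
rewrite inE => /existsP[x /andP[/IH Hx Hxv]].
have Hv : x \in ball e 1 v by apply: ball_step (ball_center v) _; rewrite esym.
exact: ball_comp Hv Hx.
Qed.

Lemma dist_sym u v : dist e u v = dist e v u.
Proof.
by apply/eqP; rewrite eqn_leq -!mem_ballE; apply/andP; split; apply: ball_sym; exact: dist_ball.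
Qed.

End Distance.

Lemma dist_characterization (T : finType) (e : rel T) (dl : T -> T -> nat) :
  (forall u, dl u u = 0) ->
  (forall u v, v != u -> exists x, e x v /\ (dl u x).+1 = dl u v) ->
  (forall u x y, e x y -> dl u y <= (dl u x).+1) ->
  connected e /\ (forall u v, dist e u v = dl u v).
Proof.
move=> dl_self dl_pred dl_edge.
have in_ball k u v : dl u v <= k -> v \in ball e (dl u v) u.
  elim: k v => [|k IH] v dl_le; have [->|vu] := eqVneq v u; try by rewrite dl_self inE.
    by have [x [_ dx]] := dl_pred u v vu; lia.
  have [x [xv dx]] := dl_pred u v vu.
  by rewrite -dx; apply: ball_step xv; apply: IH; lia.
have out_ball k u v : v \in ball e k u -> dl u v <= k.
  elim: k v => [|k IH] v /=; first by rewrite inE => /eqP->; rewrite dl_self.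
  rewrite in_setU => /orP[/IH/leqW //|]; rewrite inE => /existsP[x /andP[/IH Hx xv]].
  exact: leq_trans (dl_edge u x v xv) _.
have econ : connected e by move=> u v; apply: ball_connect (in_ball _ u v (leqnn _)).
split=> // u v; apply/eqP; rewrite eqn_leq -mem_ballE //.
by rewrite (in_ball _ _ _ (leqnn _)) (out_ball _ _ _ (dist_ball econ u v)).
Qed.

Lemma bigmax_attained (I : finType) (F : I -> nat) M i0 :
  (forall i, F i <= M) -> F i0 = M -> \max_i F i = M.
Proof.
move=> F_le Fi0; apply/eqP; rewrite eqn_leq -{2}Fi0 leq_bigmax andbT.
by apply/bigmax_leqP => i _; exact: F_le.
Qed.

Lemma sum_subset_le (I : finType) (A B : {set I}) (F : I -> nat) :
  A \subset B -> \sum_(i in A) F i <= \sum_(i in B) F i.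
Proof.
by move=> AB; rewrite [X in _ <= X](big_setID A) (setIidPr AB) leq_addr.
Qed.

Lemma sum_pair_le (I : finType) (A : {set I}) (F : I -> nat) i j :
  i \in A -> j \in A -> i != j -> F i + F j <= \sum_(k in A) F k.
Proof.
move=> Ai Aj ij; rewrite (bigD1 i Ai) leq_add2l (bigD1 j) ?leq_addr //.
by apply/andP; rewrite eq_sym.
Qed.

Lemma uphalf_bounds d : d <= uphalf d + uphalf d <= d.+1.
Proof. by rewrite addnn -leq_uphalf_double -geq_uphalf_double leqnn. Qed.

Lemma diametral_pair (T : finType) (e : rel T) :
  0 < #|T| -> exists a b, dist e a b = diameter e.
Proof.
move=> T_gt0; have [a ecc_a] := eq_bigmax (ecc e) T_gt0.
have [b dist_b] := eq_bigmax (dist e a) T_gt0.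
by exists a, b; rewrite /diameter ecc_a /ecc dist_b.
Qed.

Definition weight (T : finType) (e : rel T) (E : {set T}) : nat :=
  \prod_(x in E) ecc e x.

Lemma weight_pair (T : finType) (e : rel T) x y :
  x != y -> weight e [set x; y] = ecc e x * ecc e y.
Proof. by move=> xy; rewrite /weight big_setU1 ?big_set1 // inE. Qed.

Lemma pair_neq (T : finType) (x y w : T) : x != y -> x != w -> [set x; w] != [set y; w].
Proof.
move=> xy xw; apply/eqP => pairs_eq.
have : x \in [set y; w] by rewrite -pairs_eq !inE eqxx.
by rewrite !inE (negbTE xy) (negbTE xw).
Qed.

Section LowerBound.
Variables (T : finType) (e : rel T).
Hypotheses (esym : symmetric e) (eirr : irreflexive e) (econ : connected e).
Variables (d : nat) (a b : T).
Hypotheses (d_gt0 : 0 < d) (dist_ab : dist e a b = d).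
Local Notation r := (uphalf d).

(* Every vertex is at distance at least d/2 from a or from b. *)
Lemma ecc_ge_half w : r <= ecc e w.
Proof.
have := dist_triangle econ a w b; rewrite dist_ab (dist_sym econ esym a w).
have := dist_ecc e w a; have := dist_ecc e w b; have := uphalf_bounds d; lia.
Qed.

Lemma edge_neq x y : e x y -> x != y.
Proof. by move=> xy; apply/eqP => xy_eq; rewrite xy_eq eirr in xy. Qed.

Lemma pair_in_edges x y : e x y -> [set x; y] \in edges e.
Proof.
by move=> xy; rewrite inE; apply/existsP; exists x; apply/existsP; exists y; rewrite xy eqxx.
Qed.

(* An edge goes down from at most one of
   its ends, so these sets are pairwise disjoint. *)
Definition down_edges (phi : T -> nat) (w : T) : {set {set T}} :=
  [set E in edges e | (w \in E) && [forall x in E, (x != w) ==> (phi x < phi w)]].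

Lemma down_edges_pair phi w x :
  e x w -> phi x < phi w -> [set x; w] \in down_edges phi w.
Proof.
move=> xw lt_xw; rewrite inE pair_in_edges // !inE eqxx orbT /=.
by apply/forall_inP => y; rewrite !inE => /orP[]/eqP->; rewrite ?lt_xw ?eqxx ?implybT.
Qed.

Lemma down_edges_disjoint phi w w' :
  w != w' -> [disjoint down_edges phi w & down_edges phi w'].
Proof.
move=> ww'; rewrite -setI_eq0; apply/eqP/setP => E; rewrite !inE.
apply/negP => /andP[/and3P[_ wE /forall_inP down_w] /and3P[_ w'E /forall_inP down_w']].
by move: (down_w w' w'E) (down_w' w wE); rewrite eq_sym ww' /=; lia.
Qed.

(* Then the
   edges going down from w have total weight at least r(r+1):
   either the edge towards u already has weight r(r+1), or ecc w = r and w is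
   at distance exactly r from both u and v, and the edges towards u and towards
   v are two distinct edges of weight at least r * r each. *)
Lemma down_edges_weight phi u v w :
  dist e u v = d -> w != u -> phi w = dist e u w ->
  (forall x, phi x <= dist e u x) -> (forall x, phi x <= dist e v x) ->
  r * r.+1 <= \sum_(E in down_edges phi w) weight e E.
Proof.
move=> duv wu phi_w phi_u phi_v.
have r_bounds := uphalf_bounds d.
have [x [xw dx]] := dist_pred econ wu.
have x_down : [set x; w] \in down_edges phi w.
  by apply: down_edges_pair; rewrite // phi_w -dx ltnS phi_u.
have one_edge : ecc e x * ecc e w <= \sum_(E in down_edges phi w) weight e E.
  by rewrite -weight_pair ?edge_neq // (bigD1 _ x_down) leq_addr.
have ex := ecc_ge_half x; have ew := ecc_ge_half w.
have [w_far|w_near] := ltnP r (ecc e w).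
  by apply: leq_trans one_edge; rewrite leq_mul.
have duw : dist e u w <= r.
  by rewrite (dist_sym econ esym); exact: leq_trans (dist_ecc _ _ _) w_near.
have [duw_lt|duw_ge] := ltnP (dist e u w) r.
  apply: leq_trans one_edge; rewrite mulnC leq_mul //.
  by have := dist_triangle econ u x v; have := dist_ecc e x v; lia.
have dvw : dist e v w = r.
  have := dist_ecc e w v; rewrite (dist_sym econ esym w v).
  by have := phi_v w; lia.
have wv : w != v by apply/eqP => wv_eq; move: dvw; rewrite wv_eq dist_self //; lia.
have [y [yw dy]] := dist_pred econ wv.
have y_down : [set y; w] \in down_edges phi w.
  by apply: down_edges_pair; rewrite // phi_w; have := phi_v y; lia.
have xy : x != y.
  apply/eqP => xy_eq; move: dy; rewrite -xy_eq (dist_sym econ esym v x).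
  by have := dist_triangle econ u x v; lia.
have := sum_pair_le (weight e) x_down y_down (pair_neq xy (edge_neq xw)).
rewrite !weight_pair ?edge_neq //; apply: leq_trans.
by have := ecc_ge_half y; nia.
Qed.

(* A shortest path from a to b, walked backwards from b: back v is a
   neighbour of v one step closer to a, and geodesic i is the vertex at
   distance i from a on this path. *)
Definition back (v : T) : T :=
  odflt v [pick x | e x v && ((dist e a x).+1 == dist e a v)].

Lemma back_spec v : v != a -> e (back v) v /\ (dist e a (back v)).+1 = dist e a v.
Proof.
move=> va; rewrite /back; case: pickP => [x /andP[xv /eqP dx] //|no_pred].
by have [x [xv dx]] := dist_pred econ va; move: (no_pred x); rewrite xv dx eqxx.
Qed.

Lemma dist_iter_back j : j <= d -> dist e a (iter j back b) = d - j.
Proof.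
elim: j => [|j IH] j_lt; first by rewrite subn0.
have {}IH := IH (ltnW j_lt).
have va : iter j back b != a.
  by apply/eqP => v_eq; move: IH; rewrite v_eq dist_self //; lia.
by have [_] := back_spec va; rewrite iterS; lia.
Qed.

Definition geodesic (i : nat) : T := iter (d - i) back b.

Lemma geodesic_dist i : i <= d -> dist e a (geodesic i) = i.
Proof. by move=> i_le; rewrite dist_iter_back ?leq_subr // subKn. Qed.

Lemma geodesic_edge i : i < d -> e (geodesic i) (geodesic i.+1).
Proof.
move=> i_lt; have va : geodesic i.+1 != a.
  by apply/eqP => v_eq; move: (geodesic_dist i_lt); rewrite v_eq dist_self.
have [+ _] := back_spec va.
by rewrite /geodesic -iterS subnSK.
Qed.

Lemma geodesic_inj i j : i <= d -> j <= d -> geodesic i = geodesic j -> i = j.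
Proof. by move=> i_le j_le eq_ij; rewrite -(geodesic_dist i_le) eq_ij geodesic_dist. Qed.

Lemma geodesic0 : geodesic 0 = a.
Proof. by apply: (dist_eq0 econ); rewrite geodesic_dist. Qed.

Lemma geodesic_last : geodesic d = b.
Proof. by rewrite /geodesic subnn. Qed.

(* The i-th path vertex is at distance i from a and d - i from b. *)
Lemma ecc_geodesic i : i <= d -> maxn i (d - i) <= ecc e (geodesic i).
Proof.
move=> i_le; rewrite geq_max -{1}(geodesic_dist i_le) (dist_sym econ esym).
rewrite dist_ecc /=; have := dist_triangle econ a (geodesic i) b.
by rewrite dist_ab geodesic_dist //; have := dist_ecc e (geodesic i) b; lia.
Qed.

Definition path_vertices : {set T} := [set geodesic i | i : 'I_d.+1].

Definition path_edges : {set {set T}} :=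
  [set [set geodesic i; geodesic i.+1] | i : 'I_d].

Lemma geodesic_in_path i : i <= d -> geodesic i \in path_vertices.
Proof. by move=> i_le; apply/imsetP; exists (Ordinal (i_le : i < d.+1)). Qed.

Lemma card_path_vertices : #|path_vertices| = d.+1.
Proof.
rewrite card_imset ?card_ord // => i j /geodesic_inj eq_ij.
by apply/val_inj/eq_ij; rewrite -ltnS.
Qed.

Lemma path_edges_sub : path_edges \subset edges e.
Proof.
by apply/subsetP => _ /imsetP[i _ ->]; apply/pair_in_edges/geodesic_edge.
Qed.

(* The path edges are distinct (distances from a tell them apart) and the
   i-th one has weight at least the i-th term of g2 d. *)
Lemma path_edges_weight : g2 d <= \sum_(E in path_edges) weight e E.
Proof.
have dist_in i j : i < d -> j <= d ->
    geodesic j \in [set geodesic i; geodesic i.+1] -> j = i \/ j = i.+1.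
  move=> i_lt j_le; rewrite !inE => /orP[] /eqP /(congr1 (dist e a));
  by rewrite !geodesic_dist ?(ltnW i_lt) //; lia.
rewrite big_imset => [|i j _ _ eq_ij]; last first.
  have [i_lt j_lt] := (ltn_ord i, ltn_ord j); apply: val_inj => /=.
  have := dist_in i j i_lt (ltnW j_lt); rewrite eq_ij !inE eqxx => /(_ isT).
  have := dist_in j i j_lt (ltnW i_lt); rewrite -eq_ij !inE eqxx => /(_ isT).
  lia.
apply: leq_sum => i _; have i_lt := ltn_ord i.
rewrite weight_pair; first by apply: leq_mul; apply: ecc_geodesic; lia.
by apply/eqP => /(geodesic_inj (ltnW i_lt) i_lt); lia.
Qed.

Definition height (x : T) : nat := minn (dist e a x) (dist e b x).

Definition private_edges (w : T) : {set {set T}} :=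
  if w \in path_vertices then set0 else down_edges height w.

Lemma private_edges_weight w :
  w \notin path_vertices -> r * r.+1 <= \sum_(E in private_edges w) weight e E.
Proof.
move=> w_off; rewrite /private_edges (negbTE w_off).
have wa : w != a by apply: contraNneq w_off => ->; rewrite -geodesic0 geodesic_in_path.
have wb : w != b by apply: contraNneq w_off => ->; rewrite -geodesic_last geodesic_in_path.
have [near_a|near_b] := leqP (dist e a w) (dist e b w).
  by apply: (down_edges_weight (u := a) (v := b)); rewrite // /height;
    [apply/minn_idPl | move=> x; apply: geq_minl | move=> x; apply: geq_minr].
apply: (down_edges_weight (u := b) (v := a)); rewrite // /height.
- by rewrite (dist_sym econ esym).
- by apply/minn_idPr/ltnW.
- by move=> x; apply: geq_minr.
- by move=> x; apply: geq_minl.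
Qed.

Lemma private_edges_disjoint w w' :
  w != w' -> [disjoint private_edges w & private_edges w'].
Proof.
rewrite /private_edges -setI_eq0; case: ifP => _; first by rewrite set0I.
case: ifP => _; first by rewrite setI0.
by rewrite setI_eq0; exact: down_edges_disjoint.
Qed.

Definition off_path_edges : {set {set T}} := \bigcup_w private_edges w.

Lemma off_path_edges_sub : off_path_edges \subset edges e.
Proof.
apply/bigcupsP => w _; rewrite /private_edges; case: ifP => _; first exact: sub0set.
by apply/subsetP => E; rewrite inE => /andP[].
Qed.

(* A down edge contains its top vertex, which is off the path, whereas both
   ends of a path edge lie on the path. *)
Lemma path_off_path_disjoint : [disjoint path_edges & off_path_edges].
Proof.
rewrite -setI_eq0; apply/eqP/setP => E; rewrite !inE; apply/negP.
case/andP => /imsetP[i _ ->] /bigcupP[w _]; rewrite /private_edges.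
case: ifP => [_|w_off]; first by rewrite inE.
rewrite inE => /and3P[_ + _]; rewrite !inE => /orP[] /eqP w_eq.
  by rewrite w_eq geodesic_in_path // ltnW in w_off.
by rewrite w_eq geodesic_in_path in w_off.
Qed.

Lemma off_path_weight :
  (#|T| - 1 - d) * (r * r.+1) <= \sum_(E in off_path_edges) weight e E.
Proof.
rewrite /off_path_edges partition_disjoint_bigcup; last exact: private_edges_disjoint.
have off_card : #|T| - 1 - d = #|~: path_vertices|.
  by have := cardsC path_vertices; rewrite card_path_vertices; lia.
rewrite off_card -sum_nat_const [X in _ <= X](bigID (mem (~: path_vertices))) /=.
apply: leq_trans (leq_addr _ _); apply: leq_sum => w.
by rewrite inE; exact: private_edges_weight.
Qed.

(* The lower bound: the path edges and the private edges of the n - d - 1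
   off-path vertices are disjoint sets of edges. *)
Theorem sigma2_lower_bound : sigma2_bound #|T| d <= sigma2 e.
Proof.
have all_sub : path_edges :|: off_path_edges \subset edges e.
  by rewrite subUset path_edges_sub off_path_edges_sub.
apply: leq_trans (sum_subset_le (weight e) all_sub).
rewrite /sigma2_bound (eq_bigl [predU path_edges & off_path_edges]) => [|E]; last first.
  by rewrite !inE.
by rewrite bigU ?path_off_path_disjoint // leq_add ?path_edges_weight ?off_path_weight.
Qed.

End LowerBound.

Section TreeModel.
Variable d : nat.

Definition tree_rel (i j : nat) : bool :=
  [|| (i <= d) && (j <= d) && ((i.+1 == j) || (j.+1 == i)),
      (d < i) && (j == d./2)
    | (d < j) && (i == d./2)].

(* Each vertex projects onto the path; leaves sit one level above it.  Distance
   is the distance between projections plus the levels of the ends. *)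
Definition proj (i : nat) : nat := if d < i then d./2 else i.
Definition level (i : nat) : nat := if d < i then 1 else 0.
Definition tree_dist (i j : nat) : nat :=
  if i == j then 0 else (proj i - proj j) + (proj j - proj i) + level i + level j.

Definition parent (k : nat) : nat := if k <= d then k.-1 else d./2.

End TreeModel.

Ltac tree_arith :=
  rewrite /tree_dist /proj /level ?ltn0; repeat (case: ifP => [?|/negbT ?]); lia.

Section TreeDistance.
Variable d : nat.

Lemma tree_rel_sym i j : tree_rel d i j = tree_rel d j i.
Proof. by rewrite /tree_rel; lia. Qed.

Lemma tree_rel_irr i : tree_rel d i i = false.
Proof. by rewrite /tree_rel; lia. Qed.

Lemma tree_dist_self u : tree_dist d u u = 0.
Proof. by rewrite /tree_dist eqxx. Qed.

Lemma tree_dist_edge u x y : tree_rel d x y -> tree_dist d u y <= (tree_dist d u x).+1.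
Proof. by rewrite /tree_rel => xy; tree_arith. Qed.

(* Every vertex v other than u has a neighbour one step closer to u; it can be
   chosen below max u v, i.e. inside any initial segment containing u and v. *)
Lemma tree_dist_pred u v :
  v != u -> exists x, [/\ x <= maxn u v, tree_rel d x v & (tree_dist d u x).+1 = tree_dist d u v].
Proof.
move=> vu; rewrite /tree_rel.
have [u_le|u_gt] := leqP u d; have [v_le|v_gt] := leqP v d.
- have [uv|vu'] := ltnP u v.
    by exists v.-1; split; [lia | lia | tree_arith].
  by exists v.+1; split; [lia | lia | tree_arith].
- by exists d./2; split; [lia | lia | tree_arith].
- have [v_lt|v_gt|v_eq] := ltngtP v d./2.
  + by exists v.+1; split; [lia | lia | tree_arith].
  + by exists v.-1; split; [lia | lia | tree_arith].
  + by exists u; split; [lia | lia | tree_arith].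
- by exists d./2; split; [lia | lia | tree_arith].
Qed.

Lemma parent_lt k : k != 0 -> parent d k < k.
Proof. by rewrite /parent; case: ifP; lia. Qed.

Lemma tree_rel_parentE i j :
  tree_rel d i j = ((i != 0) && (parent d i == j)) || ((j != 0) && (parent d j == i)).
Proof. by rewrite /tree_rel /parent; do 2 case: ifP; lia. Qed.

End TreeDistance.

Section ExtremalTree.
Variables m d : nat.
Hypotheses (d_gt0 : 0 < d) (d_le : d <= m) (leaves_d : d < m -> 1 < d).
Local Notation G := (extremal_tree m.+1 d).
Local Notation r := (uphalf d).

Lemma ord_le (i : 'I_m.+1) : i <= m.
Proof. by rewrite -ltnS. Qed.

Lemma G_tree_rel (i j : 'I_m.+1) : G i j = tree_rel d i j.
Proof. by []. Qed.

Lemma G_dist : connected G /\ (forall u v : 'I_m.+1, dist G u v = tree_dist d u v).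
Proof.
apply: dist_characterization => [u|u v vu|u x y]; first exact: tree_dist_self.
- have [x [x_le xv dx]] := tree_dist_pred d (vu : val v != val u).
  have x_lt : x < m.+1 by rewrite (leq_ltn_trans x_le) // gtn_max !ltn_ord.
  by exists (Ordinal x_lt).
- exact: tree_dist_edge.
Qed.

Definition tree_ecc (k : nat) : nat := if k <= d then maxn k (d - k) else r.+1.

Lemma tree_dist_le_ecc u v : u <= m -> v <= m -> tree_dist d u v <= tree_ecc u.
Proof.
move=> u_le v_le; rewrite /tree_ecc uphalfE.
by have [/leaves_d|] := ltnP d m; tree_arith.
Qed.

Lemma tree_ecc_attained u : exists2 v, v \in [:: 0; d] & tree_dist d u v = tree_ecc u.
Proof.
rewrite /tree_ecc uphalfE; case: (leqP u d) => u_le.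
  have [far_d|far_0] := leqP u (d - u).
    by exists d; rewrite ?inE ?eqxx ?orbT //; tree_arith.
  by exists 0; rewrite ?inE ?eqxx //; tree_arith.
by exists d; rewrite ?inE ?eqxx ?orbT //; tree_arith.
Qed.

Lemma ecc_G (u : 'I_m.+1) : ecc G u = tree_ecc u.
Proof.
have [v v_end dv] := tree_ecc_attained u.
have v_lt : v < m.+1 by move: v_end; rewrite !inE => /orP[] /eqP ->; rewrite ltnS.
apply: (bigmax_attained (i0 := Ordinal v_lt)) => [w|]; rewrite (proj2 G_dist) //.
exact: tree_dist_le_ecc (ord_le u) (ord_le w).
Qed.

(* The path ends 0 and d have eccentricity d, the maximum. *)
Lemma diameter_G : diameter G = d.
Proof.
apply: (bigmax_attained (i0 := ord0)) => [i|]; rewrite ecc_G /tree_ecc; last first.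
  by rewrite subn0 max0n.
have := ord_le i; rewrite uphalfE.
by have [/leaves_d|] := ltnP d m; case: ifP; lia.
Qed.

Definition parent_ord (j : 'I_m.+1) : 'I_m.+1 := inord (parent d j).

Lemma parent_ordE (j : 'I_m.+1) : (parent_ord j : nat) = parent d j.
Proof.
by rewrite /parent_ord inordK // ltnS /parent; have := ord_le j; case: ifP; lia.
Qed.

Definition non_root : {set 'I_m.+1} := [set j : 'I_m.+1 | (j : nat) != 0].

Lemma edges_G : edges G = [set [set j; parent_ord j] | j in non_root].
Proof.
apply/setP => E; apply/idP/imsetP.
  rewrite inE => /existsP[u /existsP[v /andP[]]].
  rewrite G_tree_rel tree_rel_parentE -!parent_ordE => /orP[] /andP[nz /eqP p_eq] /eqP ->.
    by exists u; rewrite ?inE //; congr [set _; _]; apply: val_inj.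
  by exists v; rewrite ?inE // setUC; congr [set _; _]; apply: val_inj.
case=> j; rewrite inE => nz ->; rewrite inE; apply/existsP; exists j; apply/existsP.
by exists (parent_ord j); rewrite eqxx andbT G_tree_rel tree_rel_parentE parent_ordE nz eqxx.
Qed.

Lemma sigma2_G_sum : sigma2 G = \sum_(j in non_root) tree_ecc j * tree_ecc (parent d j).
Proof.
rewrite /sigma2 edges_G big_imset /= => [|i j]; last first.
  rewrite !inE => i_nz j_nz eq_ij.
  have : i \in [set j; parent_ord j] by rewrite -eq_ij !inE eqxx.
  have : j \in [set i; parent_ord i] by rewrite eq_ij !inE eqxx.
  rewrite !inE => /orP[/eqP -> //|/eqP /(congr1 (@nat_of_ord _)) j_par].
  case/orP=> [/eqP -> //|/eqP /(congr1 (@nat_of_ord _)) i_par]; exfalso.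
  have := parent_lt d i_nz; have := parent_lt d j_nz.
  by rewrite !parent_ordE in j_par i_par; lia.
apply: eq_bigr => j; rewrite inE => nz.
rewrite -[\prod_(x in _) _]/(weight G _) weight_pair ?ecc_G ?parent_ordE //.
apply/eqP => /(congr1 (@nat_of_ord _)); rewrite parent_ordE.
by have := parent_lt d nz; lia.
Qed.

Lemma tree_edge_sum :
  \sum_(j in non_root) tree_ecc j * tree_ecc (parent d j) = g2 d + (m - d) * (r * r.+1).
Proof.
set F := fun k => tree_ecc k * tree_ecc (parent d k).
rewrite (eq_bigl (fun j : 'I_m.+1 => (j : nat) != 0)) => [|j]; last by rewrite inE.
rewrite -(big_mkord (fun j => j != 0) F) (big_cat_nat _ (n := d.+1)) //.
congr (_ + _).
  rewrite big_mkcond big_nat_recl //= add0n /g2.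
  rewrite -(big_mkord xpredT (fun i => maxn i (d - i) * maxn i.+1 (d - i.+1))).
  apply: eq_big_nat => i /andP[_ i_lt].
  by rewrite /F /tree_ecc /parent i_lt (ltnW i_lt) mulnC.
rewrite big_mkcond (eq_big_nat _ _ (F2 := fun _ => r * r.+1)) => [|j /andP[j_gt _]].
  by rewrite sum_nat_const_nat subSS.
have -> : (j != 0) = true by lia.
rewrite /F /tree_ecc /parent leqNgt j_gt /= uphalfE mulnC.
by congr (_ * _); case: ifP; lia.
Qed.

End ExtremalTree.

Theorem corollary3p3 :
  (forall (T : finType) (e : rel T),
      symmetric e -> irreflexive e -> connected e ->
      forall d : nat, diameter e = d -> 1 <= d -> d < #|T| ->
      sigma2_bound #|T| d <= sigma2 e)
  /\
  (forall n d : nat, 1 <= d -> d < n -> (2 <= d \/ n = d.+1) ->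
      [/\ symmetric (extremal_tree n d), irreflexive (extremal_tree n d),
          connected (extremal_tree n d),
          diameter (extremal_tree n d) = d
        & sigma2 (extremal_tree n d) = sigma2_bound n d]).
Proof.
split.
  move=> T e esym eirr econ d diam_d d_gt0 d_lt.
  have [a [b dist_ab]] := diametral_pair e (leq_ltn_trans (leq0n d) d_lt).
  exact: (sigma2_lower_bound esym eirr econ d_gt0 (etrans dist_ab diam_d)).
move=> n d d_gt0; case: n => [//|m] d_le leaves_or_path.
have leaves_d : d < m -> 1 < d by case: leaves_or_path => // [[->]]; rewrite ltnn.
split.
- by move=> i j; exact: tree_rel_sym.
- by move=> i; exact: tree_rel_irr.
- exact: (proj1 (G_dist m d)).
- exact: diameter_G.
- rewrite (sigma2_G_sum d_gt0 d_le leaves_d) (tree_edge_sum d_gt0 d_le leaves_d).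
  by rewrite /sigma2_bound subn1.
Qed.
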